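(* Let $\ell\in\mathbb{N}$ be fixed. Let $G\in\mathcal{G}_{k,n,p}$ and $v\neq w\in V(G)$, and let $X=X_0,X_1,\dots$ be a simple random walk on $G$ starting at $w$. Then \[ H_{wv}=\ell+H_{\mu_\ell v}-\frac{2|E(G)|}{d(v)}\sum_{i=1}^{\ell-1}\mathbb{P}_w[X_i=v]\pm\mathcal{O}\!\left(\frac1{pn}\right). \]
   Context: Fix an integer $k\ge2$ and let $p=p(n)$ satisfy $\frac{\log n}{n^{(k-1)/k}}\le p\le 1-\Omega(\frac{\log^4 n}{n})$. $\mathcal{G}_{k,n,p}$ denotes the set of graphs $G$ on $n$ vertices satisfying: (i) $G$ is not bipartite; (ii) $\operatorname{diam}(G)\le k$; (iii) every vertex has degree $d(v)=pn\pm\mathcal{O}(\sqrt{pn\log n})$; (iv) $2|E(G)|=pn^2\pm\mathcal{O}(\sqrt{pn^2\log n})$; (v) $|N(v)\cap N(w)|=p^2n\pm\mathcal{O}(\max\{\sqrt{p^2n\log n},\log n\})$ for all $v\ne w$; (vi) the unit eigenvector $\phi$ of the largest adjacency eigenvalue has entries $\phi_i=\frac1{\sqrt n}\pm\mathcal{O}(\frac{\log^{3/2}n}{\sqrt p\,n\log(pn)})$; (vii) $\lambda_1=(1+o(1))pn$; (viii) $\max\{|\lambda_2|,|\lambda_n|\}=\mathcal{O}(\sqrt{pn})$, where $\lambda_1\ge\dots\ge\lambda_n$ are the adjacency eigenvalues. Asymptotic notation is as $n\to\infty$ with constants independent of $n$. $\mathbb{P}_w[\cdot]=\mathbb{P}[\cdot\mid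 X_0=w]$; $\mu_\ell(x)=\mathbb{P}_w[X_\ell=x]$; $H_{uv}$ is the expected first hitting time of $v$ from $u$ ($H_{vv}=0$) and $H_{\mu_\ell v}=\sum_u\mu_\ell(u)H_{uv}$. *)

From HB Require Import structures.
From mathcomp Require Import all_boot all_order all_algebra.
From mathcomp Require Import all_classical all_reals all_analysis.
Set Implicit Arguments. Unset Strict Implicit. Unset Printing Implicit Defensive.
Import Order.TTheory GRing.Theory Num.Theory numFieldTopology.Exports numFieldNormedType.Exports.
Local Open Scope ring_scope.

Definition simple_graph (n : nat) (e : rel 'I_n) : Prop :=
  (forall x y, e x y = e y x) /\ (forall x, ~~ e x x).

Section Graphs.
Variables (R : realType) (n : nat) (e : rel 'I_n).

Definition nbhd (x : 'I_n) : {set 'I_n} := [set y | e x y].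
Definition deg (x : 'I_n) : nat := #|nbhd x|.
Definition nedges : nat := #|[set xy : 'I_n * 'I_n | e xy.1 xy.2 && (xy.1 < xy.2)%N]|.

Definition bipartite : Prop :=
  exists f : 'I_n -> bool, forall x y, e x y -> f x != f y.

Definition diam_le (k : nat) : Prop :=
  forall x y : 'I_n, exists s : seq 'I_n,
    [/\ (size s <= k)%N, path e x s & last x s = y].

Definition adjmx : 'M[R]_n := \matrix_(i, j) (e i j)%:R.

(* eigenvalues with multiplicity, in non-increasing order lambda_1 >= ... >= lambda_n *)
Definition is_spectrum (A : 'M[R]_n) (s : seq R) : Prop :=
  sorted (fun a b => b <= a) s /\
  char_poly A = \prod_(x <- s) ('X - x%:P).

Definition trans : 'M[R]_n :=
  \matrix_(i, j) (if e i j then (deg i)%:R^-1 else 0).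

Definition walkprob (t : nat) (w x : 'I_n) : R := (trans ^+ t) w x.

(* walk killed on entering v *)
Definition killed (v : 'I_n) : 'M[R]_n :=
  \matrix_(i, j) (if j == v then 0 else trans i j).

(* P_u[T_v = t] for t >= 1, where T_v = min {t >= 0 : X_t = v} and u <> v *)
Definition firstpass (v u : 'I_n) (t : nat) : R :=
  \sum_(x : 'I_n) (killed v ^+ t.-1) u x * trans x v.

Definition hit_terms (u v : 'I_n) : R^nat :=
  fun t => t%:R * (if t == 0%N then 0 else firstpass v u t).

Definition hit (u v : 'I_n) : R :=
  if u == v then 0
  else limn (series (hit_terms u v)).

(* H_{mu_l v} = sum_u mu_l(u) H_uv, mu_l(u) = P_w[X_l = u] *)
Definition hit_mu (l : nat) (w v : 'I_n) : R :=
  \sum_(u : 'I_n) walkprob l w u * hit u v.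

End Graphs.

(* The class G_{k,n,p}; c is the constant hidden in the O(.) terms of
   (iii)-(vi),(viii), eps is the value at n of the o(1) term in (vii). *)
Definition in_class (R : realType) (k n : nat) (p c eps : R) (e : rel 'I_n) : Prop :=
  let nR : R := n%:R in
  [/\ simple_graph e,
      ~ bipartite e,
      diam_le e k,
      [/\ (forall v, `|(deg e v)%:R - p * nR| <= c * Num.sqrt (p * nR * ln nR)),
      `|(2 * nedges e)%:R - p * nR ^+ 2| <= c * Num.sqrt (p * nR ^+ 2 * ln nR)
    & (forall v w, v != w ->
         `|(#|nbhd e v :&: nbhd e w|)%:R - p ^+ 2 * nR|
           <= c * Num.max (Num.sqrt (p ^+ 2 * nR * ln nR)) (ln nR))]
    & (exists s : seq R, is_spectrum (adjmx R e) s /\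
      [/\ (exists phi : 'cV[R]_n,
             [/\ adjmx R e *m phi = s`_0 *: phi,
                 \sum_i phi i 0 ^+ 2 = 1
               & forall i, `|phi i 0 - (Num.sqrt nR)^-1|
                     <= c * (ln nR `^ (3 / 2)) / (Num.sqrt p * nR * ln (p * nR))]),
          `|s`_0 - p * nR| <= eps * (p * nR)
        & Num.max `|s`_1| `|s`_(n.-1)| <= c * Num.sqrt (p * nR)])].

From HB Require Import structures.
From mathcomp Require Import all_boot all_order all_algebra.
From mathcomp Require Import all_classical all_reals all_analysis.
From mathcomp Require Import ring.
Import Order.TTheory GRing.Theory Num.Theory numFieldTopology.Exports numFieldNormedType.Exports.
Set Implicit Arguments. Unset Strict Implicit. Unset Printing Implicit Defensive.
Local Open Scope classical_set_scope.
Local Open Scope ring_scope.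

(* The error term is in fact zero. With T_v^+ = min {t >= 1 : X_t = v}, first-step
   analysis gives, for every u,
     sum_y P(u, y) H_yv = H_uv - 1 + [u = v] E_v[T_v^+],
   and summing this identity against the stationary weights d(u) yields Kac's formula
   E_v[T_v^+] = 2|E|/d(v). Averaging it over mu_i and inducting on i gives
     H_{mu_l v} = H_wv - l + (2|E|/d(v)) sum_{i < l} P_w[X_i = v],
   whose i = 0 term vanishes since w <> v. All hitting times are finite: as the diameter
   is at most k, from every vertex the walk visits v within k steps with probability
   bounded away from 0, so the tail sums E_x[T_v^+] = sum_t P_x[T_v^+ > t] converge. *)

Lemma degE (n : nat) (e : rel 'I_n) x : deg e x = (\sum_y e x y)%N.
Proof. by rewrite /deg /nbhd -sum1_card big_mkcond; apply: eq_bigr => y _; rewrite inE. Qed.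

Lemma sum_deg (n : nat) (e : rel 'I_n) : simple_graph e ->
  (\sum_x deg e x = 2 * nedges e)%N.
Proof.
move=> [e_sym e_irr].
have nedgesE : nedges e = (\sum_x \sum_y (e x y && (x < y)%N))%N.
  rewrite /nedges -sum1_card big_mkcond pair_bigA /=.
  by apply: eq_bigr => -[x y] _; rewrite inE.
have edge_split x y : e x y = ((e x y && (x < y)) + (e y x && (y < x)))%N :> nat.
  rewrite [e y x]e_sym; case exy: (e x y) => //=.
  by case: ltngtP => // xy; rewrite (ord_inj xy) (negbTE (e_irr y)) in exy.
under eq_bigr do rewrite degE; under eq_bigr do under eq_bigr do rewrite edge_split.
under eq_bigr do rewrite big_split /=.
by rewrite big_split /= -nedgesE exchange_big /= -nedgesE mul2n addnn.
Qed.

Lemma sum_mulr_eq (T : finType) (V : pzRingType) (f : T -> V) (v : T) (c : V) :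
  \sum_u f u * (if u == v then c else 0) = f v * c.
Proof. by rewrite (bigD1 v) //= eqxx big1 ?addr0 // => u /negbTE ->; rewrite mulr0. Qed.

Section RandomWalk.
Variables (R : realType) (n : nat) (e : rel 'I_n).
Hypothesis deg_gt0 : forall x, (0 < deg e x)%N.

Local Notation P := (trans R e).

Lemma trans_ge0 x y : 0 <= P x y.
Proof. by rewrite mxE; case: ifP => // _; rewrite invr_ge0 ler0n. Qed.

Lemma deg_trans x y : (deg e x)%:R * P x y = (e x y)%:R.
Proof.
rewrite mxE; case: (e x y); last by rewrite mulr0.
by rewrite mulfV // pnatr_eq0 -lt0n deg_gt0.
Qed.

Lemma trans_sum1 x : \sum_y P x y = 1.
Proof.
apply: (mulfI (_ : (deg e x)%:R != 0)); first by rewrite pnatr_eq0 -lt0n deg_gt0.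
by rewrite mulr_sumr mulr1 [in RHS]degE natr_sum; apply: eq_bigr => y _; rewrite deg_trans.
Qed.

Lemma walkprob0 x y : walkprob R e 0 x y = (x == y)%:R.
Proof. by rewrite /walkprob expr0 mxE. Qed.

Lemma walkprob_sum1 t x : \sum_y walkprob R e t x y = 1.
Proof.
elim: t x => [|t IH] x.
  by rewrite (bigD1 x) //= big1 => [|y yx]; rewrite walkprob0 ?eqxx ?addr0 // eq_sym (negbTE yx).
rewrite /walkprob exprS; under eq_bigr do rewrite mxE.
rewrite exchange_big /= -(trans_sum1 x); apply: eq_bigr => y _.
by rewrite -mulr_sumr IH mulr1.
Qed.

Lemma walkprobSr_sum t w (f : 'I_n -> R) :
  \sum_u walkprob R e t.+1 w u * f u = \sum_y walkprob R e t w y * \sum_u P y u * f u.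
Proof.
rewrite /walkprob; under eq_bigr do rewrite exprSr mxE mulr_suml.
rewrite exchange_big /=; apply: eq_bigr => y _.
by rewrite mulr_sumr; apply: eq_bigr => u _; rewrite mulrA.
Qed.

Lemma deg_stationary : (forall x y, e x y = e y x) ->
  forall y, \sum_x (deg e x)%:R * P x y = (deg e y)%:R.
Proof.
move=> e_sym y; rewrite degE natr_sum.
by apply: eq_bigr => x _; rewrite deg_trans e_sym.
Qed.

Section KilledWalk.
Variable v : 'I_n.

Local Notation Q := (killed R e v).

Lemma killed_sum x (f : 'I_n -> R) :
  \sum_y Q x y * f y = \sum_y P x y * (if y == v then 0 else f y).
Proof. by apply: eq_bigr => y _; rewrite mxE; case: ifP; rewrite ?mul0r ?mulr0. Qed.

Lemma killed_ge0 x y : 0 <= Q x y.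
Proof. by rewrite mxE; case: ifP => // _; apply: trans_ge0. Qed.

Lemma killedX_ge0 t x y : 0 <= (Q ^+ t) x y.
Proof.
elim: t x y => [|t IH] x y; first by rewrite expr0 mxE; case: (x == y).
by rewrite exprS mxE; apply: sumr_ge0 => z _; rewrite mulr_ge0 ?killed_ge0.
Qed.

(* [surv t x] is the probability that the walk from [x] avoids [v] at times [1, ..., t]. *)
Definition surv t x := \sum_y (Q ^+ t) x y.

Lemma surv0 x : surv 0 x = 1.
Proof.
by rewrite /surv expr0 (bigD1 x) //= big1 => [|y /negbTE yx]; rewrite mxE ?eqxx ?addr0 // eq_sym yx.
Qed.

Lemma survD t s x : surv (t + s) x = \sum_y (Q ^+ t) x y * surv s y.
Proof.
rewrite /surv exprD; under eq_bigr do rewrite mxE.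
by rewrite exchange_big; apply: eq_bigr => y _; rewrite mulr_sumr.
Qed.

Lemma survS t x : surv t.+1 x = \sum_y Q x y * surv t y.
Proof. by rewrite -add1n survD; under eq_bigr do rewrite expr1. Qed.

Lemma surv1 x : surv 1 x = 1 - P x v.
Proof.
rewrite survS killed_sum (bigD1 v) //= eqxx mulr0 add0r.
rewrite -(trans_sum1 x) [in RHS](bigD1 v) //= addrAC subrr add0r.
by apply: eq_bigr => y /negbTE ->; rewrite surv0 mulr1.
Qed.

Lemma surv_ge0 t x : 0 <= surv t x.
Proof. by apply: sumr_ge0 => y _; apply: killedX_ge0. Qed.

Lemma surv_le t1 t2 x : (t1 <= t2)%N -> surv t2 x <= surv t1 x.
Proof.
apply: (nonincreasing_seqP (surv^~ x)).1 => t.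
rewrite -addn1 survD; apply: ler_sum => y _; rewrite -[leRHS]mulr1.
by rewrite ler_wpM2l ?killedX_ge0 // surv1 lerBlDr lerDl trans_ge0.
Qed.

Lemma surv_le1 t x : surv t x <= 1.
Proof. by rewrite -(surv0 x) surv_le. Qed.

Lemma firstpassE t x : firstpass R e v x t.+1 = surv t x - surv t.+1 x.
Proof.
rewrite /firstpass /= -addn1 survD [surv t x]/surv -sumrB; apply: eq_bigr => y _.
by rewrite surv1 mulrBr mulr1 opprB addrC subrK.
Qed.

Lemma surv_path_lt1 s x : s != [::] -> path e x s -> last x s = v ->
  surv (size s) x < 1.
Proof.
elim: s x => [|y s IH] x; first by rewrite eqxx.
move=> _ /= /andP[exy ys] sv.
set f := fun z => if z == v then 0 else surv (size s) z.
have f_le1 z : f z <= 1 by rewrite /f; case: ifP => _; rewrite ?ler01 ?surv_le1.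
have fy_lt1 : f y < 1.
  rewrite /f; case: eqVneq => [_|yv]; first exact: ltr01.
  by apply: IH => //; case: s ys sv {f f_le1} => //= _ yv'; rewrite yv' eqxx in yv.
have Pxy_gt0 : 0 < P x y by rewrite mxE exy invr_gt0 ltr0n.
rewrite survS killed_sum -(trans_sum1 x) (bigD1 y) //= [ltRHS](bigD1 y) //=.
apply: ltr_leD; first by rewrite -[ltRHS]mulr1 ltr_pM2l.
by apply: ler_sum => z _; apply: ler_piMr (trans_ge0 x z) (f_le1 z).
Qed.

Definition surv_sum N x := \sum_(0 <= t < N) surv t x.

Lemma surv_sumD t N x :
  surv_sum (t + N) x = surv_sum t x + \sum_y (Q ^+ t) x y * surv_sum N y.
Proof.
rewrite /surv_sum (big_cat_nat (leq0n t) (leq_addr N t)) /=; congr (_ + _).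
rewrite -{1}[t]add0n big_addn addKn; under eq_bigr do rewrite addnC survD.
by rewrite exchange_big; apply: eq_bigr => y _; rewrite mulr_sumr.
Qed.

Lemma surv_sum_le_nat N x : surv_sum N x <= N%:R.
Proof.
rewrite -[N in N%:R]subn0 -sumr_const_nat.
by apply: ler_sum => t _; apply: surv_le1.
Qed.

Lemma surv_sum_nondecreasing x : nondecreasing_seq (surv_sum^~ x).
Proof.
apply/nondecreasing_seqP => N.
by rewrite /surv_sum big_nat_recr //= lerDl surv_ge0.
Qed.

Section Reachable.
Variable k : nat.
Hypothesis reach_v : forall x, exists s,
  [/\ s != [::], (size s <= k)%N, path e x s & last x s = v].

Lemma surv_lt1 x : surv k x < 1.
Proof.
have [s [s0 sk xs sv]] := reach_v x.
exact: le_lt_trans (surv_le x sk) (surv_path_lt1 s0 xs sv).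
Qed.

(* With [a := max_x surv k x < 1], splitting off the first [k] steps gives
   [surv_sum (k + N) x <= k + a * max_y surv_sum N y], whence the bound [k / (1 - a)]. *)
Lemma surv_sum_bounded : exists B, forall N x, surv_sum N x <= B.
Proof.
pose x0 := [arg max_(x > v) surv k x]%O.
have surv_k_le x : surv k x <= surv k x0 by rewrite /x0; case: arg_maxP => // y _; apply.
set a := surv k x0; have a_lt1 : a < 1 := surv_lt1 x0.
have k_gt0 : (0 < k)%N.
  by rewrite lt0n; apply/eqP => k0; move: (surv_lt1 v); rewrite k0 surv0 ltxx.
have a1_gt0 : 0 < 1 - a by rewrite subr_gt0.
exists (k%:R / (1 - a)); elim=> [|N IH] x.
  by rewrite /surv_sum big_geq // divr_ge0 // ltW.
apply: le_trans (surv_sum_nondecreasing x (_ : N.+1 <= k + N)%N) _.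
  by rewrite -add1n leq_add2r.
rewrite surv_sumD.
apply: le_trans (lerD (surv_sum_le_nat k x) (_ : _ <= k%:R / (1 - a) * a)) _.
  apply: le_trans (_ : \sum_y (Q ^+ k) x y * (k%:R / (1 - a)) <= _).
    by apply: ler_sum => y _; rewrite ler_wpM2l ?killedX_ge0.
  by rewrite -mulr_suml -/(surv k x) mulrC ler_wpM2l // divr_ge0 // ltW.
by rewrite le_eqVlt; apply/orP; left; apply/eqP; field; rewrite lt0r_neq0.
Qed.

Lemma surv_sum_cvg x : cvgn (surv_sum^~ x).
Proof.
apply: nondecreasing_is_cvgn; first exact: surv_sum_nondecreasing.
by have [B hB] := surv_sum_bounded; exists B => _ [N _ <-].
Qed.

(* [hit_plus x] is E_x[T_v^+] with T_v^+ = min {t >= 1 : X_t = v}, by the tail-sum formula. *)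
Definition hit_plus x := limn (surv_sum^~ x).

Lemma surv_cvg0 x : surv^~ x @ \oo --> 0.
Proof. by apply: cvg_series_cvg_0; apply: surv_sum_cvg. Qed.

Lemma series_hit_terms x N :
  series (hit_terms R e x v) N.+1 = surv_sum N x - N%:R * surv N x.
Proof.
elim: N => [|N IH].
  by rewrite /series /= big_nat1 /hit_terms mul0r /surv_sum big_geq // mul0r subr0.
rewrite /series /= big_nat_recr //= -[LHS]/(series _ N.+1 + _) IH.
rewrite /hit_terms /= firstpassE /surv_sum big_nat_recr //= -natr1; ring.
Qed.

Lemma hit_partial_cvg x :
  (fun N => surv_sum N x - N%:R * surv N x) @ \oo --> hit_plus x.
Proof.
set S := fun N => _.
have S_le N : S N <= surv_sum N x by rewrite /S lerBlDr lerDl mulr_ge0 ?surv_ge0.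
have S_ge M N : (M <= N)%N -> surv_sum M x - M%:R * surv N x <= S N.
  move=> MN; have E K :
      surv_sum K x - K%:R * surv N x = \sum_(0 <= t < K) (surv t x - surv N x).
    by rewrite sumrB sumr_const_nat subn0 mulr_natl.
  rewrite /S !E (big_cat_nat (leq0n M) MN) /= lerDl big_nat_cond.
  by apply: sumr_ge0 => t /andP[/andP[_ tN] _]; rewrite subr_ge0 surv_le // ltnW.
have S_cvg : cvgn S.
  apply: nondecreasing_is_cvgn.
    apply/nondecreasing_seqP => N; rewrite -subr_ge0.
    have -> : S N.+1 - S N = N.+1%:R * (surv N x - surv N.+1 x).
      by rewrite /S /surv_sum big_nat_recr //= -natr1; ring.
    by rewrite mulr_ge0 // subr_ge0 surv_le.
  have [B hB] := surv_sum_bounded.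
  by exists B => _ [N _ <-]; apply: le_trans (S_le N) (hB N x).
suff <- : limn S = hit_plus x by [].
apply/le_anti/andP; split.
  by apply: ler_lim => //; [exact: surv_sum_cvg | apply: nearW].
apply: limr_le; first exact: surv_sum_cvg.
apply: nearW => M; apply: (ler_cvg_to _ S_cvg).
  rewrite -[X in _ --> X]subr0 -(mulr0 M%:R); apply: cvgB; first exact: cvg_cst.
  by apply: cvgM; [exact: cvg_cst | exact: surv_cvg0].
by near=> N; apply: S_ge; near: N; exact: nbhs_infty_ge.
Unshelve. all: by end_near.
Qed.

Lemma hitE x : x != v -> hit R e x v = hit_plus x.
Proof.
move=> xv; rewrite /hit (negbTE xv); apply: (cvg_lim (@Rhausdorff R)).
rewrite -cvg_shiftS; under [X in X @ _]funext do rewrite /= series_hit_terms.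
exact: hit_partial_cvg.
Qed.

Lemma hit_plus_first_step x : hit_plus x = 1 + \sum_y Q x y * hit_plus y.
Proof.
have surv_sumS N : surv_sum N.+1 x = 1 + \sum_y Q x y * surv_sum N y.
  by rewrite -add1n surv_sumD /surv_sum big_nat1 surv0; under eq_bigr do rewrite expr1.
have lim_hit : surv_sum N.+1 x @[N --> \oo] --> hit_plus x.
  by have := @surv_sum_cvg x; rewrite -cvg_shiftS.
have lim_step : surv_sum N.+1 x @[N --> \oo] --> 1 + \sum_y Q x y * hit_plus y.
  rewrite (funext surv_sumS); apply: cvgD; first exact: cvg_cst.
  apply: cvg_big => [|y _]; first exact: add_continuous.
  by apply: cvgM; [exact: cvg_cst | exact: surv_sum_cvg].
exact: cvg_unique lim_hit lim_step.
Qed.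

Lemma trans_hit x : \sum_y P x y * hit R e y v
  = hit R e x v - 1 + (if x == v then hit_plus v else 0).
Proof.
have -> : \sum_y P x y * hit R e y v = hit_plus x - 1.
  rewrite hit_plus_first_step [1 + _]addrC addrK killed_sum; apply: eq_bigr => y _.
  by case: eqVneq => [->|/hitE ->]; rewrite // /hit eqxx mulr0.
by case: eqVneq => [->|/hitE ->]; rewrite /hit ?eqxx; ring.
Qed.

Lemma walkprob_hit i w : \sum_u walkprob R e i w u * hit R e u v
  = hit R e w v - i%:R + hit_plus v * \sum_(0 <= j < i) walkprob R e j w v.
Proof.
elim: i => [|i IH].
  rewrite big_geq // mulr0 addr0 subr0 (bigD1 w) //= big1 => [|u uw].
    by rewrite walkprob0 eqxx mul1r addr0.
  by rewrite walkprob0 eq_sym (negbTE uw) mul0r.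
rewrite walkprobSr_sum; under eq_bigr do rewrite trans_hit mulrDr mulrBr mulr1.
rewrite big_split sumrB /= IH walkprob_sum1 sum_mulr_eq big_nat_recr //= -natr1; ring.
Qed.

Hypothesis e_sym : forall x y, e x y = e y x.

Lemma hit_plus_kac : hit_plus v = (\sum_x deg e x)%:R / (deg e v)%:R.
Proof.
set d := fun x => (deg e x)%:R : R.
have dv_neq0 : d v != 0 by rewrite pnatr_eq0 -lt0n deg_gt0.
have : \sum_y d y * hit R e y v
     = \sum_x (d x * hit R e x v - d x + d x * (if x == v then hit_plus v else 0)).
  under eq_bigr do rewrite /d -(deg_stationary e_sym) mulr_suml.
  rewrite exchange_big /=; apply: eq_bigr => x _.
  under eq_bigr do rewrite -mulrA.
  by rewrite -mulr_sumr trans_hit /d mulrDr mulrBr mulr1.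
rewrite big_split sumrB /= sum_mulr_eq.
rewrite -addrA -[LHS]addr0 => /addrI/eqP; rewrite eq_sym addrC subr_eq0 => /eqP dv_hit.
by rewrite natr_sum -dv_hit mulrC mulKf.
Qed.

End Reachable.
End KilledWalk.
End RandomWalk.

Lemma diam_deg_gt0 (n k : nat) (e : rel 'I_n) (v w : 'I_n) :
  diam_le e k -> v != w -> forall x, (0 < deg e x)%N.
Proof.
move=> diam vw x.
have [y yx] : exists y, y != x.
  by case: (eqVneq x v) => [->|xv]; [exists w; rewrite eq_sym | exists v; rewrite eq_sym].
have [[|z s] [_ xs sy]] := diam x y; first by move: yx; rewrite -sy /= eqxx.
by apply/card_gt0P; exists z; move: xs; rewrite inE /= => /andP[].
Qed.

Lemma diam_reach (n k : nat) (e : rel 'I_n) :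
  simple_graph e -> (2 <= k)%N -> diam_le e k -> (forall x, (0 < deg e x)%N) ->
  forall v x, exists s, [/\ s != [::], (size s <= k)%N, path e x s & last x s = v].
Proof.
move=> [e_sym _] k_ge2 diam deg_gt0 v x.
case: (eqVneq x v) => [->|xv].
  have /card_gt0P [y] := deg_gt0 v; rewrite inE => evy.
  by exists [:: y; v]; rewrite /= evy e_sym evy.
have [s [sk xs sv]] := diam x v; exists s; split=> //.
by apply: contra_neq xv => s0; rewrite -sv s0.
Qed.

Theorem lemma5p1 (R : realType) (k l : nat) (p : nat -> R) :
  (2 <= k)%N ->
  (exists (c0 : R) (N0 : nat), 0 < c0 /\ forall n : nat, (N0 <= n)%N ->
     ln n%:R / n%:R `^ ((k.-1)%:R / k%:R) <= p n /\
     p n <= 1 - c0 * ln n%:R ^+ 4 / n%:R) ->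
  forall (c : R) (eps : nat -> R), eps @ \oo --> 0 ->
  exists (C : R) (N : nat), forall (n : nat) (e : rel 'I_n), (N <= n)%N ->
    in_class k (p n) c (eps n) e ->
    forall v w : 'I_n, v != w ->
      `| hit R e w v
         - (l%:R + hit_mu R e l w v
            - (2 * nedges e)%:R / (deg e v)%:R
              * \sum_(1 <= i < l) walkprob R e i w v) |
      <= C / (p n * n%:R).
Proof.
move=> k_ge2 _ c eps _; exists 0, 0%N => n e _ [graph _ diam _ _] v w vw.
have deg_gt0 := diam_deg_gt0 diam vw.
have reach := diam_reach graph k_ge2 diam deg_gt0 v.
rewrite mul0r normr_le0 subr_eq0 /hit_mu (walkprob_hit R deg_gt0 reach).
rewrite (hit_plus_kac R deg_gt0 reach graph.1) sum_deg //.
have -> : \sum_(0 <= j < l) walkprob R e j w v = \sum_(1 <= j < l) walkprob R e j w v.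
  case: l => [|l]; first by rewrite !big_geq.
  by rewrite big_ltn // walkprob0 eq_sym (negbTE vw) add0r.
by apply/eqP; ring.
Qed.
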